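(* Let $\mathfrak{q}_1,\dots,\mathfrak{q}_n$ be finite-dimensional complex simply-complete Lie algebras, each equipped with a CPA-product. Then the direct Lie algebra sum $\mathfrak{q}_1\oplus\cdots\oplus\mathfrak{q}_n$ admits the CPA-product given componentwise by $(x_1,\dots,x_n)\cdot(y_1,\dots,y_n)=(x_1\cdot y_1,\dots,x_n\cdot y_n)$. Conversely, if $\mathfrak{q}=\mathfrak{q}_1\oplus\cdots\oplus\mathfrak{q}_n$ is a complete Lie algebra which is a direct sum of simply-complete ideals $\mathfrak{q}_i$, then every CPA-product on $\mathfrak{q}$ is of this componentwise form (for CPA-products on the $\mathfrak{q}_i$).
   Context: A Lie algebra $\mathfrak{g}$ is complete if $Z(\mathfrak{g})=0$ and every derivation is inner ($\mathrm{Der}(\mathfrak{g})=\mathrm{ad}(\mathfrak{g})$); it is simply-complete if it is complete and no non-trivial ideal of it is complete. A CPA-product on a Lie algebra is a bilinear product $x\cdot y$ satisfying, for all $x,y,z$: $x\cdot y=y\cdot x$; $[x,y]\cdot z=x\cdot(y\cdot z)-y\cdot(x\cdot z)$; $x\cdot[y,z]=[x\cdot y,z]+[y,x\cdot z]$. *)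

From HB Require Import structures.
From mathcomp Require Import all_boot all_order all_algebra.
From mathcomp Require Import complex.
From mathcomp Require Import reals.
Set Implicit Arguments. Unset Strict Implicit. Unset Printing Implicit Defensive.
Import Order.TTheory GRing.Theory Num.Theory.
Local Open Scope ring_scope.

Section LieDefs.
Variables (F : fieldType) (L : vectType F).
Implicit Types (br p : L -> L -> L) (U I : {vspace L}).

Definition is_lie_bracket br : Prop :=
  [/\ (forall a x y z, br (a *: x + y) z = a *: br x z + br y z),
      (forall a x y z, br x (a *: y + z) = a *: br x y + br x z),
      (forall x, br x x = 0) &
      (forall x y z, br x (br y z) + br y (br z x) + br z (br x y) = 0)].

Definition lie_ideal br U I : Prop :=
  (I <= U)%VS /\ (forall x y, x \in U -> y \in I -> br x y \in I).

(* D is a derivation of the Lie algebra U (only its values on U matter). *)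
Definition lie_derivation br U (D : L -> L) : Prop :=
  [/\ (forall x, x \in U -> D x \in U),
      (forall a x y, x \in U -> y \in U -> D (a *: x + y) = a *: D x + D y) &
      (forall x y, x \in U -> y \in U -> D (br x y) = br (D x) y + br x (D y))].

Definition lie_inner br U (D : L -> L) : Prop :=
  exists2 a, a \in U & forall x, x \in U -> D x = br a x.

Definition lie_complete br U : Prop :=
  (forall z, z \in U -> (forall x, x \in U -> br x z = 0) -> z = 0) /\
  (forall D, lie_derivation br U D -> lie_inner br U D).

Definition lie_simply_complete br U : Prop :=
  lie_complete br U /\
  (forall I, lie_ideal br U I -> I != 0%VS -> I != U -> ~ lie_complete br I).

Definition cpa_product br U p : Prop :=
  [/\ (forall x y, x \in U -> y \in U -> p x y \in U),
      (forall a x y z, x \in U -> y \in U -> z \in U ->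
          p (a *: x + y) z = a *: p x z + p y z),
      (forall x y, x \in U -> y \in U -> p x y = p y x),
      (forall x y z, x \in U -> y \in U -> z \in U ->
          p (br x y) z = p x (p y z) - p y (p x z)) &
      (forall x y z, x \in U -> y \in U -> z \in U ->
          p x (br y z) = br (p x y) z + br y (p x z))].

Definition componentwise n (q : 'I_n -> {vspace L})
    (p : 'I_n -> L -> L -> L) (P : L -> L -> L) : Prop :=
  forall x y : 'I_n -> L, (forall i, x i \in q i) -> (forall i, y i \in q i) ->
    P (\sum_i x i) (\sum_i y i) = \sum_i p i (x i) (y i).

End LieDefs.

(* The projections onto the ideals q_i of a direct sum are Lie algebra
   homomorphisms, because distinct ideals commute: [q_i, q_j] lies in
   q_i /\ q_j = 0.  Hence the sum of the p_i read off through these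
   projections is again a CPA-product.  Conversely, the last CPA axiom says
   that left multiplication by any x is a derivation of q; as q is complete
   it is inner, so it maps every ideal into itself.  By commutativity of the
   product, P(q_i, q_j) then lies in q_i /\ q_j = 0 for i <> j, so P is the
   componentwise product of its own restrictions. *)
From HB Require Import structures.
From mathcomp Require Import all_boot all_order all_algebra.
From mathcomp Require Import complex.
From mathcomp Require Import reals.
Set Implicit Arguments. Unset Strict Implicit. Unset Printing Implicit Defensive.
Import GRing.Theory.
Local Open Scope ring_scope.

Lemma biadditive_sum_diag (I : finType) (U V W : zmodType) (f : U -> V -> W)
    (a : I -> U) (b : I -> V) :
  (forall x y z, f (x + y) z = f x z + f y z) ->
  (forall x y z, f x (y + z) = f x y + f x z) ->
  (forall i j, i != j -> f (a i) (b j) = 0) ->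
  f (\sum_i a i) (\sum_j b j) = \sum_i f (a i) (b i).
Proof.
move=> fDl fDr f_offdiag.
have f0l z : f 0 z = 0 by apply: (addrI (f 0 z)); rewrite -fDl !addr0.
have f0r z : f z 0 = 0 by apply: (addrI (f z 0)); rewrite -fDr !addr0.
rewrite (big_morph (f^~ _) (fun x y => fDl x y _) (f0l _)); apply: eq_bigr => i _.
rewrite (big_morph (f (a i)) (fDr (a i)) (f0r _)) (bigD1 i) //= big1 ?addr0 //.
by move=> j ji; rewrite f_offdiag // eq_sym.
Qed.

Section DirectSum.

Variables (F : fieldType) (L : vectType F) (n : nat) (q : 'I_n -> {vspace L}).
Hypothesis dxq : directv (\sum_i q i)%VS.
Hypothesis sumq_full : (\sum_i q i)%VS = fullv.

Lemma directv_sum_eq (x y : 'I_n -> L) :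
  (forall i, x i \in q i) -> (forall i, y i \in q i) ->
  \sum_i x i = \sum_i y i -> x =1 y.
Proof.
move=> qx qy; move/directv_sum_unique: dxq => uniq_q /eqP.
rewrite (uniq_q x y (fun i _ => qx i) (fun i _ => qy i)) => /forall_inP eq_xy i.
exact/eqP/eq_xy.
Qed.

Lemma directv_cap_eq0 (i j : 'I_n) x : i != j -> x \in q i -> x \in q j -> x = 0.
Proof.
move=> ij qix qjx; apply/eqP.
rewrite -memv0 -(directv_sumP dxq i isT) memv_cap qix.
by apply: subvP qjx; apply: (sumv_sup j) => //=; rewrite eq_sym.
Qed.

Definition dproj i : 'End(L) := sumv_pi_for (esym sumq_full) i.

Lemma memv_dproj i v : dproj i v \in q i.
Proof. exact: memv_sum_pi. Qed.

Lemma sum_dproj v : \sum_i dproj i v = v.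
Proof. exact: sumv_pi_sum (memvf v). Qed.

Lemma dprojD i : {morph dproj i : u v / u + v}.
Proof. exact: raddfD. Qed.

Lemma dprojB i : {morph dproj i : u v / u - v}.
Proof. exact: raddfB. Qed.

Lemma dprojZ i a : {morph dproj i : u / a *: u}.
Proof. exact: linearZ. Qed.

Lemma dproj_inj u v : (forall i, dproj i u = dproj i v) -> u = v.
Proof. by move=> eq_uv; rewrite -(sum_dproj u) -(sum_dproj v); apply: eq_bigr. Qed.

Lemma dproj_sum (x : 'I_n -> L) : (forall i, x i \in q i) ->
  forall j, dproj j (\sum_i x i) = x j.
Proof.
move=> qx; apply: directv_sum_eq qx _ => [i|]; first exact: memv_dproj.
by rewrite sum_dproj.
Qed.

End DirectSum.

Section LieBracket.

Variables (F : fieldType) (L : vectType F) (br : L -> L -> L).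
Hypothesis lie_br : is_lie_bracket br.

Lemma lie_brDl x y z : br (x + y) z = br x z + br y z.
Proof. by case: lie_br => brPl _ _ _; have := brPl 1 x y z; rewrite !scale1r. Qed.

Lemma lie_brDr x y z : br x (y + z) = br x y + br x z.
Proof. by case: lie_br => _ brPr _ _; have := brPr 1 x y z; rewrite !scale1r. Qed.

Lemma lie_br_anti x y : br x y = - br y x.
Proof.
case: lie_br => _ _ br_xx _; apply/eqP; rewrite -addr_eq0.
by have := br_xx (x + y); rewrite lie_brDl !lie_brDr !br_xx add0r addr0 => ->.
Qed.

Lemma lie_ideal_brr I x y : lie_ideal br fullv I -> y \in I -> br x y \in I.
Proof. by case=> _ brI /brI; apply; apply: memvf. Qed.

Lemma lie_ideal_brl I x y : lie_ideal br fullv I -> x \in I -> br x y \in I.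
Proof. by move=> idI Ix; rewrite lie_br_anti memvN lie_ideal_brr. Qed.

Lemma complete_derivation_ideal D I y :
  lie_complete br fullv -> lie_derivation br fullv D ->
  lie_ideal br fullv I -> y \in I -> D y \in I.
Proof.
move=> [_ inner] /inner[a _ Da] idI Iy.
by rewrite Da ?memvf // lie_ideal_brr.
Qed.

Section CPAProduct.

Variable P : L -> L -> L.
Hypothesis cpaP : cpa_product br fullv P.

Lemma cpa_mulDl x y z : P (x + y) z = P x z + P y z.
Proof.
case: cpaP => _ PPl _ _ _; have := PPl 1 x y z; rewrite !scale1r.
by apply; apply: memvf.
Qed.

Lemma cpa_mulC x y : P x y = P y x.
Proof. by case: cpaP => _ _ PC _ _; rewrite PC ?memvf. Qed.

Lemma cpa_mulP a x y z : P x (a *: y + z) = a *: P x y + P x z.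
Proof.
case: cpaP => _ PPl _ _ _.
by rewrite cpa_mulC PPl ?memvf // [P y x]cpa_mulC [P z x]cpa_mulC.
Qed.

Lemma cpa_mulDr x y z : P x (y + z) = P x y + P x z.
Proof. by have := cpa_mulP 1 x y z; rewrite !scale1r. Qed.

Lemma cpa_mul_derivation x : lie_derivation br fullv (P x).
Proof.
case: cpaP => _ _ _ _ Pbr.
split=> [y _ | a y z _ _ | y z _ _]; first exact: memvf.
  exact: cpa_mulP.
by rewrite Pbr ?memvf.
Qed.

Lemma cpa_product_sub (U : {vspace L}) :
  (forall x y, x \in U -> y \in U -> P x y \in U) -> cpa_product br U P.
Proof.
case: cpaP => _ PPl PC Pass Pbr UP.
by split=> *; [exact: UP | apply: PPl | apply: PC | apply: Pass | apply: Pbr];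
  apply: memvf.
Qed.

End CPAProduct.

Section DirectSumOfIdeals.

Variables (n : nat) (q : 'I_n -> {vspace L}).
Hypothesis ideal_q : forall i, lie_ideal br fullv (q i).
Hypothesis dxq : directv (\sum_i q i)%VS.
Hypothesis sumq_full : (\sum_i q i)%VS = fullv.

Local Notation dproj := (dproj sumq_full).

Lemma lie_ideals_commute i j x y : i != j -> x \in q i -> y \in q j -> br x y = 0.
Proof.
move=> ij qix qjy; apply: (directv_cap_eq0 dxq ij).
  exact: lie_ideal_brl.
exact: lie_ideal_brr.
Qed.

Lemma lie_br_dproj x y : br x y = \sum_i br (dproj i x) (dproj i y).
Proof.
rewrite -{1}(sum_dproj sumq_full x) -{1}(sum_dproj sumq_full y).
apply: biadditive_sum_diag => [||i j ij]; [exact: lie_brDl | exact: lie_brDr |].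
by apply: (lie_ideals_commute ij); apply: memv_dproj.
Qed.

Lemma dproj_br i x y : dproj i (br x y) = br (dproj i x) (dproj i y).
Proof.
rewrite lie_br_dproj dproj_sum // => k.
by apply: lie_ideal_brr (ideal_q k) _; apply: memv_dproj.
Qed.

Definition dsum_product (p : 'I_n -> L -> L -> L) x y :=
  \sum_i p i (dproj i x) (dproj i y).

Variable p : 'I_n -> L -> L -> L.
Hypothesis cpa_p : forall i, cpa_product br (q i) (p i).

Lemma dproj_dsum_product i x y :
  dproj i (dsum_product p x y) = p i (dproj i x) (dproj i y).
Proof.
rewrite dproj_sum // => k; case: (cpa_p k) => pq _ _ _ _.
by apply: pq; apply: memv_dproj.
Qed.

Lemma cpa_dsum_product : cpa_product br fullv (dsum_product p).
Proof.
split=> [x y _ _ | a x y z _ _ _ | x y _ _ | x y z _ _ _ | x y z _ _ _].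
- exact: memvf.
all: apply: (dproj_inj (sumq_full := sumq_full)) => i.
all: case: (cpa_p i) => _ pP pC pass pbr.
all: rewrite ?dprojB ?dprojD ?dprojZ ?dproj_br !dproj_dsum_product.
all: rewrite ?dproj_br ?dprojD ?dprojZ.
- by rewrite pP //; apply: memv_dproj.
- by rewrite pC //; apply: memv_dproj.
- by rewrite pass //; apply: memv_dproj.
- by rewrite pbr //; apply: memv_dproj.
Qed.

Lemma componentwise_dsum_product : componentwise q p (dsum_product p).
Proof. by move=> x y qx qy; apply: eq_bigr => i _; rewrite !dproj_sum. Qed.

End DirectSumOfIdeals.

Section CompleteDirectSum.

Variables (n : nat) (q : 'I_n -> {vspace L}).
Hypothesis ideal_q : forall i, lie_ideal br fullv (q i).
Hypothesis dxq : directv (\sum_i q i)%VS.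
Hypothesis complete_L : lie_complete br fullv.
Variable P : L -> L -> L.
Hypothesis cpaP : cpa_product br fullv P.

Lemma cpa_mul_ideal i x y : y \in q i -> P x y \in q i.
Proof. exact/complete_derivation_ideal/ideal_q/cpa_mul_derivation. Qed.

Lemma cpa_product_ideal i : cpa_product br (q i) P.
Proof. by apply: cpa_product_sub => // x y _; apply: cpa_mul_ideal. Qed.

Lemma componentwise_cpa : componentwise q (fun=> P) P.
Proof.
move=> x y qx qy; apply: biadditive_sum_diag => [||i j ij].
- exact: cpa_mulDl.
- exact: cpa_mulDr.
apply: (directv_cap_eq0 dxq ij); last exact: cpa_mul_ideal.
by rewrite (cpa_mulC cpaP) cpa_mul_ideal.
Qed.

End CompleteDirectSum.

End LieBracket.

Theorem mainTheorem11 (R : realType) (L : vectType R[i]) (br : L -> L -> L)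
    (n : nat) (q : 'I_n -> {vspace L}) :
  is_lie_bracket br ->
  (forall i, lie_ideal br fullv (q i)) ->
  directv (\sum_i q i)%VS ->
  (\sum_i q i)%VS = fullv ->
  (forall i, lie_simply_complete br (q i)) ->
  (forall p : 'I_n -> L -> L -> L, (forall i, cpa_product br (q i) (p i)) ->
     exists P, cpa_product br fullv P /\ componentwise q p P) /\
  (lie_complete br fullv ->
   forall P, cpa_product br fullv P ->
     exists p : 'I_n -> L -> L -> L,
       (forall i, cpa_product br (q i) (p i)) /\ componentwise q p P).
Proof.
move=> lie_br ideal_q dxq sumq_full _; split=> [p cpa_p | complete_L P cpaP].
  exists (dsum_product sumq_full p); split.
    exact: (cpa_dsum_product lie_br ideal_q dxq sumq_full cpa_p).
  exact: (componentwise_dsum_product dxq sumq_full p).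
exists (fun=> P); split.
  exact: (cpa_product_ideal ideal_q complete_L cpaP).
exact: (componentwise_cpa ideal_q dxq complete_L cpaP).
Qed.
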